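(* Let $z\ge1$, $k\ge1$, $X\subset[\Delta]^d$ finite, and $\gamma\ge1$ a fixed constant. Let $C\subseteq X$ be a set of $k$ centers that is a $\gamma$-approximation to the optimal $(k,z)$-medoids clustering on $X$. Fix $x\in X$ and let $S$ be an optimal $(k,z)$-medoids clustering on $X$ among those containing a center at $x$. Let $W\subseteq C$ be a set of $k-1$ centers such that $W\cup\{x\}$ has minimum $(k,z)$-medoids clustering cost on $X$ among all $(k-1)$-subsets of $C$, and let $C'=W\cup\{x\}$. Then \[\mathrm{Cost}(X,S)\le\mathrm{Cost}(X,C')\le(2^z+2^{2z}+2^{2z}\gamma)\cdot\mathrm{Cost}(X,S).\]
   Context: $\mathrm{Cost}(X,C)=\sum_{y\in X}\min_{c\in C}\|y-c\|_2^z$. The $(k,z)$-medoids clustering problem on $X$ asks for a set $C\subseteq X$ with $|C|\le k$ minimizing $\mathrm{Cost}(X,C)$; $C$ is a $\gamma$-approximation if its cost is at most $\gamma$ times the optimum. *)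

From HB Require Import structures.
From mathcomp Require Import all_boot all_order all_algebra.
From mathcomp Require Import all_classical all_reals all_analysis.
Set Implicit Arguments. Unset Strict Implicit. Unset Printing Implicit Defensive.
Import Order.TTheory GRing.Theory Num.Theory.
Local Open Scope ring_scope.

(* A point of the grid [Delta]^d = {1,...,Delta}^d : coordinate i has value (p i).+1. *)
Definition gridpt (d Delta : nat) := {ffun 'I_d -> 'I_Delta}.

Definition dist (R : realType) (d Delta : nat) (p q : gridpt d Delta) : R :=
  Num.sqrt (\sum_(i < d) (((val (p i)).+1)%:R - ((val (q i)).+1)%:R) ^+ 2).

(* Cost(X,C) = sum_{y in X} min_{c in C} ||y - c||^z, valued in the extended
   reals (the min over an empty C is +oo). *)
Definition Cost (R : realType) (z : R) (d Delta : nat)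
    (X C : {set gridpt d Delta}) : \bar R :=
  (\sum_(y in X) \big[Order.min/+oo%E]_(c in C) ((dist R y c) `^ z)%:E)%E.

Definition feasible (d Delta k : nat) (X C : {set gridpt d Delta}) :=
  C \subset X /\ (#|C| <= k)%N.

Definition gamma_approx (R : realType) (z gamma : R) (d Delta k : nat)
    (X C : {set gridpt d Delta}) :=
  feasible k X C /\
  forall C0 : {set gridpt d Delta}, feasible k X C0 -> (Cost z X C <= gamma%:E * Cost z X C0)%E.

From HB Require Import structures.
From mathcomp Require Import all_boot all_order all_algebra.
From mathcomp Require Import all_classical all_reals all_analysis.
From mathcomp Require Import ring lra zify.
Set Implicit Arguments. Unset Strict Implicit. Unset Printing Implicit Defensive.
Import Order.TTheory GRing.Theory Num.Theory.
Local Open Scope ring_scope.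

(* Since |S \ {x}| < k = |C|, the map sending each center s <> x of S to its nearest
   center in C misses some c1 in C, so C' = {x} u (C \ {c1}) is a candidate for W u {x}
   that contains the image of every such s.  A point y served in S by s <> x then has
   the center of C nearest to s within dist(y,s) + dist(s,C) <= 2 dist(y,s) + dist(y,C),
   and (2a + b)^z <= 4^z (a^z + b^z) gives
   Cost(X,C') <= 4^z (Cost(X,S) + Cost(X,C)) <= 4^z (1 + gamma) Cost(X,S). *)

Section EuclideanNorm.
Variables (R : rcfType) (I : finType).
Implicit Types u v : I -> R.

Lemma cauchy_schwarz_sum u v :
  (\sum_i u i * v i) ^+ 2 <= (\sum_i u i ^+ 2) * (\sum_i v i ^+ 2).
Proof.
rewrite expr2 !big_distrlr /=.
have cross_le : 2 * (\sum_i \sum_j (u i * v i * (u j * v j))) <=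
    \sum_i \sum_j (u i ^+ 2 * v j ^+ 2) + \sum_i \sum_j (u j ^+ 2 * v i ^+ 2).
  rewrite mulr_sumr -big_split /=; apply: ler_sum => i _.
  rewrite mulr_sumr -big_split /=; apply: ler_sum => j _.
  rewrite -subr_ge0.
  have -> : u i ^+ 2 * v j ^+ 2 + u j ^+ 2 * v i ^+ 2 - 2 * (u i * v i * (u j * v j))
      = (u i * v j - u j * v i) ^+ 2 by ring.
  exact: sqr_ge0.
rewrite [X in _ + X]exchange_big /= in cross_le.
lra.
Qed.

Lemma minkowski_sum u v :
  Num.sqrt (\sum_i (u i + v i) ^+ 2) <=
  Num.sqrt (\sum_i u i ^+ 2) + Num.sqrt (\sum_i v i ^+ 2).
Proof.
set a := \sum_i u i ^+ 2; set b := \sum_i v i ^+ 2; set c := \sum_i u i * v i.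
have a_ge0 : 0 <= a by apply: sumr_ge0 => i _; exact: sqr_ge0.
have b_ge0 : 0 <= b by apply: sumr_ge0 => i _; exact: sqr_ge0.
have sumD : \sum_i (u i + v i) ^+ 2 = a + 2 * c + b.
  by rewrite /a /b /c mulr_sumr -!big_split /=; apply: eq_bigr => i _; ring.
have c_le : c <= Num.sqrt a * Num.sqrt b.
  apply: le_trans (ler_norm c) _.
  rewrite -sqrtrM // -sqrtr_sqr ler_sqrt ?mulr_ge0 //.
  exact: cauchy_schwarz_sum.
rewrite -(ger0_norm (addr_ge0 (sqrtr_ge0 a) (sqrtr_ge0 b))) -sqrtr_sqr.
rewrite ler_sqrt ?sqr_ge0 // sumD sqrrD !sqr_sqrtr //.
lra.
Qed.

End EuclideanNorm.

Lemma powR_2addr_le (R : realType) (z a b : R) : 0 <= z -> 0 <= a -> 0 <= b ->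
  (2 * a + b) `^ z <= 4 `^ z * (a `^ z + b `^ z).
Proof.
move=> z_ge0 a_ge0 b_ge0.
have powR_le (s t : R) : 0 <= s -> s <= t -> s `^ z <= t `^ z.
  by move=> s_ge0 st; apply: ge0_ler_powR; rewrite ?nnegrE // (le_trans s_ge0).
have [pa_ge0 pb_ge0] := (powR_ge0 a z, powR_ge0 b z).
have [m [m_ge0 am bm m_pow]] :
    exists m, [/\ 0 <= m, a <= m, b <= m & m `^ z <= a `^ z + b `^ z].
  by case: (leP a b) => [ab | /ltW ba]; [exists b | exists a]; split=> //; lra.
apply: le_trans (powR_le _ (4 * m) _ _) _; [lra | lra |].
by rewrite powRM //; apply: ler_wpM2l => //; apply: powR_ge0.
Qed.

Lemma exists_notin_imset (T U : finType) (f : T -> U) (A : {set T}) (B : {set U}) :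
  (#|A| < #|B|)%N -> exists2 b, b \in B & b \notin f @: A.
Proof.
move=> AB; apply/subsetPn/negP => /subset_leq_card B_le.
by have := leq_trans B_le (leq_imset_card f A); rewrite leqNgt AB.
Qed.

Section GridMedoids.
Variables (R : realType) (d Delta : nat).
Local Notation pt := (gridpt d Delta).
Local Notation dist := (@dist R d Delta).
Implicit Types (p q r s y c : pt) (A C S : {set pt}).

Lemma dist_ge0 p q : 0 <= dist p q.
Proof. exact: sqrtr_ge0. Qed.

Lemma distC p q : dist p q = dist q p.
Proof. by congr Num.sqrt; apply: eq_bigr => i _; rewrite -opprB sqrrN. Qed.

Lemma dist_triangle p q r : dist p r <= dist p q + dist q r.
Proof.
pose coord (t : pt) i : R := (val (t i)).+1%:R.
have := minkowski_sum (fun i => coord p i - coord q i) (fun i => coord q i - coord r i).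
by under eq_bigr do rewrite addrA subrK.
Qed.

(* [c0] is a default making the arg min total; it is irrelevant when [c0 \in A]. *)
Definition nearest A c0 y : pt := [arg min_(c < c0 in A) dist y c]%O.

Lemma nearest_in A c0 y : c0 \in A -> nearest A c0 y \in A.
Proof. by move=> c0A; rewrite /nearest; case: arg_minP. Qed.

Lemma nearest_min A c0 y c : c0 \in A -> c \in A -> dist y (nearest A c0 y) <= dist y c.
Proof. by move=> c0A; rewrite /nearest; case: arg_minP => // n _; apply. Qed.

Lemma dist_nearest_le C c0 y s : c0 \in C ->
  dist y (nearest C c0 s) <= 2 * dist y s + dist y (nearest C c0 y).
Proof.
move=> c0C.
have := dist_triangle y s (nearest C c0 s).
have := nearest_min s c0C (nearest_in y c0C).
have := dist_triangle s y (nearest C c0 y).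
rewrite (distC s y); lra.
Qed.

Section Cost.
Variables (z : R) (X : {set pt}).
Hypothesis z_ge0 : 0 <= z.

Lemma Cost_nearest A c0 : c0 \in A ->
  Cost z X A = (\sum_(y in X) dist y (nearest A c0 y) `^ z)%:E.
Proof.
move=> c0A; rewrite /Cost -sumEFin; apply: eq_bigr => y _.
apply: le_anti; rewrite (bigmin_le_cond _ _ (nearest_in y c0A)) /=.
apply: le_bigmin => [|c cA]; first exact: leey.
rewrite lee_fin; apply: ge0_ler_powR; rewrite ?nnegrE ?dist_ge0 //.
exact: nearest_min.
Qed.

Lemma Cost_fin A c0 : c0 \in A -> exists2 r : R, 0 <= r & Cost z X A = r%:E.
Proof.
move=> c0A; rewrite (Cost_nearest c0A); eexists; last reflexivity.
by apply: sumr_ge0 => y _; apply: powR_ge0.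
Qed.

Lemma Cost_le_sum A (h : pt -> R) :
    (forall y, y \in X -> exists2 c, c \in A & dist y c `^ z <= h y) ->
  (Cost z X A <= (\sum_(y in X) h y)%:E)%E.
Proof.
move=> near_h; rewrite /Cost -sumEFin; apply: lee_sum => y /near_h [c cA hc].
by apply: le_trans (bigmin_le_cond _ _ cA) _; rewrite lee_fin.
Qed.

Lemma Cost_swap_le S C x c0 c1 : x \in S -> c0 \in C ->
    c1 \notin nearest C c0 @: (S :\ x) ->
  (Cost z X (x |: (C :\ c1)) <= (4 `^ z)%:E * (Cost z X S + Cost z X C))%E.
Proof.
move=> xS c0C c1_unused.
rewrite (Cost_nearest xS) (Cost_nearest c0C) -EFinD -EFinM -big_split mulr_sumr /=.
apply: Cost_le_sum => y _; set s := nearest S x y; set cy := nearest C c0 y.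
have [cost_s cost_cy] := (powR_ge0 (dist y s) z, powR_ge0 (dist y cy) z).
have four_ge1 : 1 <= 4 `^ z :> R by rewrite -[leLHS](powRr0 4); apply: ler_powR; rewrite ?ler1n.
case: (eqVneq s x) => [s_x | s_x].
  exists x; first exact: setU11.
  rewrite -s_x mulrDr -[leLHS]mul1r.
  exact: ler_wpDr (mulr_ge0 (powR_ge0 4 z) cost_cy) (ler_wpM2r cost_s four_ge1).
exists (nearest C c0 s).
  rewrite setU1r // in_setD1 nearest_in // andbT.
  apply: contraNneq c1_unused => <-; apply: imset_f.
  by rewrite in_setD1 s_x nearest_in.
apply: le_trans (powR_2addr_le z_ge0 (dist_ge0 _ _) (dist_ge0 _ _)).
apply: ge0_ler_powR; rewrite ?nnegrE ?dist_ge0 ?dist_nearest_le //.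
by rewrite addr_ge0 ?mulr_ge0 ?dist_ge0.
Qed.

Lemma exists_swap_le S C x : x \in S -> (#|S| <= #|C|)%N ->
  exists2 c1, c1 \in C &
    (Cost z X (x |: (C :\ c1)) <= (4 `^ z)%:E * (Cost z X S + Cost z X C))%E.
Proof.
move=> xS SC.
have SxC : (#|S :\ x| < #|C|)%N by rewrite (cardsD1 x S) xS in SC.
have [c0 c0C] : exists c0, c0 \in C by apply/card_gt0P; apply: leq_ltn_trans SxC.
have [c1 c1C c1_unused] := exists_notin_imset (nearest C c0) SxC.
by exists c1 => //; apply: Cost_swap_le c1_unused.
Qed.

End Cost.
End GridMedoids.

Theorem lemma3p5 (R : realType) (z gamma : R) (d Delta k : nat)
    (X C S W : {set gridpt d Delta}) (x : gridpt d Delta) :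
  1 <= z -> (1 <= k)%N -> 1 <= gamma ->
  #|C| = k -> gamma_approx z gamma k X C ->
  x \in X ->
  (* S is optimal among (k,z)-medoids solutions on X containing x *)
  feasible k X S -> x \in S ->
  (forall S0 : {set gridpt d Delta}, feasible k X S0 -> x \in S0 -> (Cost z X S <= Cost z X S0)%E) ->
  (* W is a (k-1)-subset of C minimizing Cost(X, W u {x}) *)
  W \subset C -> #|W| = k.-1 ->
  (forall W0 : {set gridpt d Delta}, W0 \subset C -> #|W0| = k.-1 ->
     (Cost z X (x |: W) <= Cost z X (x |: W0))%E) ->
  (Cost z X S <= Cost z X (x |: W))%E /\
  (Cost z X (x |: W) <=
     ((2 `^ z + 2 `^ (2 * z) + 2 `^ (2 * z) * gamma)%:E * Cost z X S))%E.
Proof.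
move=> z_ge1 k_ge1 _ cardC [[CX _] C_approx] xX [SX cardS] xS S_opt WC cardW W_opt.
have z_ge0 : 0 <= z by lra.
split.
  apply: S_opt (setU11 x W); split.
    by rewrite finset.subUset finset.sub1set xX (fintype.subset_trans WC).
  by rewrite cardsU1 cardW; case: (x \notin W); lia.
have [c1 c1C swap_le] := exists_swap_le X z_ge0 xS (leq_trans cardS (eq_leq (esym cardC))).
have cardCc1 : #|C :\ c1| = k.-1 by rewrite -cardC (cardsD1 c1 C) c1C.
apply: le_trans (W_opt _ (subD1set C c1) cardCc1) _; apply: le_trans swap_le _.
have [a a_ge0 CostS] := Cost_fin X z_ge0 xS; have [b _ CostC] := Cost_fin X z_ge0 c1C.
have := C_approx S (conj SX cardS).
rewrite CostS CostC -EFinD -!EFinM !lee_fin => b_le.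
have -> : 2 `^ (2 * z) = 4 `^ z :> R.
  by rewrite powRrM (powR_mulrn 2 (ler0n _ 2)); congr (_ `^ _); rewrite expr2; lra.
have := ler_wpM2l (powR_ge0 4 z) b_le; have := mulr_ge0 (powR_ge0 2 z) a_ge0.
by rewrite !mulrDl mulrDr mulrA; lra.
Qed.
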